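(* Let $A$ be an invertible doubly nonnegative matrix and let $W=[w_{ij}]$ be its sign change matrix. If a row (respectively, column) of $W$ contains no entry greater than $4$ and at most $M$ entries greater than $2$, then the critical exponent of every entry in the corresponding row (respectively, column) of $A$ is at most $M+1$.
   Context: A real matrix is doubly nonnegative if it is symmetric, positive semidefinite, and entry-wise nonnegative. Write $A=UDU^T$ with $U=[u_{ij}]$ real orthogonal and $D=\mathrm{diag}(\lambda_1,\dots,\lambda_n)$, $\lambda_1\ge\cdots\ge\lambda_n>0$; for real $t\ge 0$, $A^t=UD^tU^T$ (so $A^0=I_n$), and $(A^t)_{ij}=\sum_k u_{ik}u_{jk}\lambda_k^t$. The sign change matrix $W$ has $w_{ij}$ equal to the number of sign changes in the coefficient sequence $(u_{i1}u_{j1},\dots,u_{in}u_{jn})$, arranged in decreasing order of the corresponding eigenvalues (zeros ignored). The critical exponent of the $i,j$-entry of $A$ is the least $m\ge 0$ such that $(A^t)_{ij}\ge 0$ for all $t\ge m$. *)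

From HB Require Import structures.
From mathcomp Require Import all_boot all_order all_algebra.
From mathcomp Require Import all_classical all_reals all_analysis.
Set Implicit Arguments. Unset Strict Implicit. Unset Printing Implicit Defensive.
Import Order.TTheory GRing.Theory Num.Theory.
Local Open Scope ring_scope.

Definition sign_changes (R : realType) (s : seq R) : nat :=
  let s' := [seq x <- s | x != 0] in
  count (fun p : R * R => p.1 * p.2 < 0) (zip s' (behead s')).

(* Sign change matrix entry w_ij for the eigenvector matrix U whose columns
   are ordered by decreasing eigenvalues: sign changes of (u_ik u_jk)_k. *)
Definition sign_change_entry (R : realType) (n : nat) (U : 'M[R]_n)
  (i j : 'I_n) : nat :=
  sign_changes [seq U i k * U j k | k <- enum 'I_n].

Definition mxpowR (R : realType) (n : nat) (U : 'M[R]_n) (lam : 'I_n -> R)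
  (t : R) : 'M[R]_n :=
  U *m diag_mx (\row_k powR (lam k) t) *m U^T.

Definition doubly_nonnegative (R : realType) (n : nat) (A : 'M[R]_n) : Prop :=
  [/\ A^T = A,
      (forall v : 'cV[R]_n, 0 <= (v^T *m A *m v) 0 0)
    & (forall i j, 0 <= A i j)].

Definition is_critical_exponent (R : realType) (n : nat) (U : 'M[R]_n)
  (lam : 'I_n -> R) (i j : 'I_n) (m : R) : Prop :=
  [/\ 0 <= m,
      (forall t, m <= t -> 0 <= mxpowR U lam t i j)
    & (forall m', 0 <= m' -> (forall t, m' <= t -> 0 <= mxpowR U lam t i j) ->
         m <= m')].

From HB Require Import structures.
From mathcomp Require Import all_boot all_order all_algebra.
From mathcomp Require Import all_classical all_reals all_analysis.
From mathcomp Require Import ring lra zify.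
Import Order.TTheory GRing.Theory Num.Theory.
Import numFieldNormedType.Exports.
Local Open Scope ring_scope.

(* Entrywise, [(A^t)_ij] is an exponential sum [sum_k u_ik u_jk exp (t ln lam_k)]
   whose coefficient sequence has [w_ij] sign changes. Descartes' rule of signs
   for such sums, together with [(A^t)_ij >= 0] at the integers (A is entrywise
   nonnegative) and [(A^0)_ij = 0] for [i != j], shows: if [w_ij <= 2] then
   [(A^t)_ij >= 0] for [t >= 1]; if [w_ij <= 4] then [(A^t)_ij] is negative in
   at most one interval [[m, m + 1]], [m >= 1]. With at most [M] such entries in
   the row, one of the windows [[m, m + 1]], [1 <= m <= M + 1], sees the whole row
   of [A^t] nonnegative, and [A^(t+1) = A^t A] propagates this to all [t >= m]. *)

Section SignChanges.
Context {R : realType}.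
Implicit Types (σ ρ : R) (s t : seq R).

(* [schanges σ s] counts the sign changes of [σ :: s], zeros ignored; the
   seed [σ = 0] imposes no sign. *)
Fixpoint schanges σ s : nat :=
  if s is x :: s' then
    if x == 0 then schanges σ s' else ((σ * x < 0)%R + schanges x s')%N
  else 0.

Fixpoint last_nz σ s : R :=
  if s is x :: s' then last_nz (if x == 0 then σ else x) s' else σ.

Lemma schanges_filter σ s : schanges σ [seq x <- s | x != 0] = schanges σ s.
Proof.
elim: s σ => //= x s IH σ.
by case: (eqVneq x 0) => [->|nx]; rewrite /= ?eqxx ?(negPf nx) /= IH.
Qed.

Lemma sign_changesE s : sign_changes s = schanges 0 s.
Proof.
rewrite /sign_changes -(schanges_filter 0 s).
have : all (fun y => y != 0) [seq x <- s | x != 0] by apply: filter_all.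
case: [seq x <- s | x != 0] => [|x l] //= /andP[nx nzl].
rewrite (negPf nx) mul0r ltxx add0n.
elim: l x nzl {nx} => //= y l IH x /andP[ny nzl].
by rewrite (negPf ny) IH.
Qed.

Lemma schanges_cat σ s1 s2 :
  schanges σ (s1 ++ s2) = (schanges σ s1 + schanges (last_nz σ s1) s2)%N.
Proof. by elim: s1 σ => //= x s1 IH σ; case: eqP => _; rewrite IH ?addnA. Qed.

Lemma schanges_opp σ s : schanges (- σ) (map -%R s) = schanges σ s.
Proof.
elim: s σ => //= x s IH σ; rewrite oppr_eq0.
by case: eqP => _; rewrite IH ?mulrNN.
Qed.

Lemma schanges_eq0_sign σ s : σ != 0 -> schanges σ s = 0%N ->
  forall x, x \in s -> 0 <= σ * x.
Proof.
elim: s σ => //= y s IH σ nσ.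
case: (eqVneq y 0) => [y0|ny] s_changes x.
  by rewrite inE => /orP[/eqP ->|/IH]; [rewrite y0 mulr0 | exact].
move: s_changes => /eqP; rewrite addn_eq0 eqb0 -leNgt => /andP[σy /eqP s_changes].
rewrite inE => /orP[/eqP -> //|/(IH y ny s_changes) yx].
have σy' : 0 < σ * y by rewrite lt_def mulf_neq0.
have y2 : 0 < y * y by rewrite lt_def mulf_neq0 //= -expr2 sqr_ge0.
nra.
Qed.

Lemma sign_changes_eq0 s : sign_changes s = 0%N ->
  exists2 τ : R, τ != 0 & forall x, x \in s -> 0 <= τ * x.
Proof.
rewrite sign_changesE; elim: s => [|y s IH] /=.
  by exists 1; rewrite ?oner_eq0.
case: (eqVneq y 0) => [y0 /IH[τ nτ Hτ]|ny].
  by exists τ => // x; rewrite inE => /orP[/eqP ->|/Hτ //]; rewrite y0 mulr0.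
rewrite mul0r ltxx add0n => s_changes.
exists y => // x; rewrite inE => /orP[/eqP ->|]; last exact: schanges_eq0_sign.
by rewrite -expr2 sqr_ge0.
Qed.

Definition nonneg_multiple (x y : R) := ((x == 0) ==> (y == 0)) && (0 <= x * y).

Lemma nonneg_multipleM (x c : R) : 0 <= c -> nonneg_multiple x (x * c).
Proof.
move=> c0; rewrite /nonneg_multiple mulrA -expr2 mulr_ge0 ?sqr_ge0 // andbT.
by apply/implyP => /eqP ->; rewrite mul0r.
Qed.

Lemma sign_change_through σ ρ (x y : R) : (ρ = 0 -> σ = 0) -> 0 < x * y ->
  ((σ * y < 0)%R <= (ρ * x < 0)%R + (σ * ρ < 0)%R)%N.
Proof.
move=> ρσ xy.
case: (ltP (σ * y) 0) => // σy; case: (ltP (ρ * x) 0) => // ρx.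
case: (ltP (σ * ρ) 0) => // σρ; exfalso.
have nρ : ρ != 0 by apply/eqP => /ρσ σ0; move: σy; rewrite σ0 mul0r ltxx.
have ρ2 : 0 < ρ * ρ by rewrite lt_def mulf_neq0 //= -expr2 sqr_ge0.
have nx : x != 0 by apply/eqP => x0; move: xy; rewrite x0 mul0r ltxx.
have x2 : 0 < x * x by rewrite lt_def mulf_neq0 //= -expr2 sqr_ge0.
have σx : 0 <= σ * x by nra.
nra.
Qed.

(* Nonnegative rescaling creates no sign change; the boolean terms account for
   the seeds [σ], [ρ] and for the last nonzero entries. *)
Lemma schanges_nonneg_multiple s t σ ρ : all2 nonneg_multiple s t ->
  (ρ = 0 -> σ = 0) ->
  (schanges σ t + (last_nz σ t * last_nz ρ s < 0)%R
     <= schanges ρ s + (σ * ρ < 0)%R)%N.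
Proof.
elim: s t σ ρ => [|x s IH] [|y t] σ ρ //= /andP[/andP[xy0 xy] st] ρσ.
case: (eqVneq x 0) => [x0|nx].
  by move: xy0; rewrite x0 eqxx => /eqP ->; rewrite eqxx; apply: IH.
have x0F : x = 0 -> forall z : R, z = 0 by move=> x0; move: nx; rewrite x0 eqxx.
have x2 : 0 < x * x by rewrite lt_def mulf_neq0 //= -expr2 sqr_ge0.
case: (eqVneq y 0) => [y0|ny].
  have := IH t σ x st (fun h => x0F h σ).
  have := @sign_change_through σ ρ x x ρσ x2; lia.
have := IH t y x st (fun h => x0F h y).
have -> : (y * x < 0) = false by apply/negbTE; rewrite -leNgt mulrC.
have := @sign_change_through σ ρ x y ρσ; rewrite lt_def mulf_neq0 //= => /(_ xy).
lia.
Qed.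

Lemma schanges_split (T : Type) (f : T -> R) σ (l : seq T) :
  (0 < schanges σ (map f l))%N -> exists l1 l2,
  let c := last_nz σ (map f l1) in
  [/\ l = l1 ++ l2, c != 0 &
      schanges c (map f l2) = (schanges (- c) (map f l2)).+1].
Proof.
elim: l σ => //= a l IH σ.
case: (eqVneq (f a) 0) => [fa0 /IH[l1 [l2 [-> ? ?]]]|nfa].
  by exists (a :: l1), l2; rewrite /= fa0 eqxx.
case: (ltP (σ * f a) 0) => [σa _|σa].
  exists [::], (a :: l); split => //=.
    by apply/eqP => σ0; move: σa; rewrite σ0 mul0r ltxx.
  by rewrite (negPf nfa) σa mulNr oppr_lt0 ltNge (ltW σa).
rewrite add0n => /IH[l1 [l2 [-> ? ?]]].
by exists (a :: l1), l2; rewrite /= (negPf nfa).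
Qed.

(* Rescaling both parts of a split by nonnegative weights and flipping the
   signs of the second part loses the sign change at the split. *)
Lemma schanges_cat_flip s1 s2 t1 t2 :
  all2 nonneg_multiple s1 t1 -> all2 nonneg_multiple s2 t2 ->
  last_nz 0 s1 != 0 ->
  schanges (last_nz 0 s1) s2 = (schanges (- last_nz 0 s1) s2).+1 ->
  (schanges 0 (t1 ++ map -%R t2) < schanges 0 (s1 ++ s2))%N.
Proof.
move=> st1 st2 nc c_change; rewrite !schanges_cat c_change.
set c := last_nz 0 s1; set L := last_nz 0 t1.
rewrite -[L]opprK schanges_opp.
have := @schanges_nonneg_multiple s1 t1 0 0 st1 (fun _ => erefl).
have := @schanges_nonneg_multiple s2 t2 (- L) (- c) st2.
have nc' : - c = 0 -> - L = 0 by move/eqP; rewrite oppr_eq0 (negPf nc).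
move=> /(_ nc') A2 A1; move: A1 A2; rewrite mulr0 ltxx mulrNN -/c -/L addn0.
move: (schanges 0 t1) (schanges (- L) t2) (schanges 0 s1) (schanges (- c) s2).
by case: (L * c < 0)%R; case: (_ * _ < 0)%R => /= *; lia.
Qed.

Lemma all2_map_map (T : Type) (r : R -> R -> bool) (f g : T -> R) l :
  all2 r (map f l) (map g l) = all (fun a => r (f a) (g a)) l.
Proof. by elim: l => //= a l ->. Qed.

(* The combinatorial half of Descartes' rule: for coefficients [x.1] listed by
   nonincreasing exponents [x.2], multiplying by [x.2 - α], with [α] the
   exponent at a sign change, strictly decreases the number of sign changes. *)
Lemma sign_changes_shift_exponent (p : seq (R * R)) w :
  sorted (relpre snd >=%R) p -> sign_changes (map fst p) = w.+1 ->
  exists α : R, (sign_changes [seq (x.1 * (x.2 - α))%R | x <- p] <= w)%N.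
Proof.
rewrite !sign_changesE => p_sorted p_changes.
have /schanges_split[l1 [l2 []]] : (0 < schanges 0 (map fst p))%N by rewrite p_changes.
case/lastP: l1 => [|l1 e] p_cat; first by rewrite eqxx.
move=> nc c_change; exists e.2.
have tr : transitive (relpre (@snd R R) >=%R) by move=> ? ? ?; apply: ge_trans.
move: p_sorted; rewrite (sorted_pairwise tr) p_cat pairwise_cat => /and3P[l1_l2 l1_sorted _].
have e_le x : x \in rcons l1 e -> e.2 <= x.2.
  rewrite mem_rcons inE => /orP[/eqP -> //|xl1].
  by move: l1_sorted; rewrite -cats1 pairwise_cat => /and3P[/allP /(_ x xl1) /andP[]].
have ge_e x : x \in l2 -> x.2 <= e.2.
  by move: l1_l2 => /allP /(_ e); rewrite mem_rcons mem_head => /(_ isT) /allP; apply.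
rewrite sign_changesE -ltnS -p_changes p_cat !map_cat.
have -> : [seq x.1 * (x.2 - e.2) | x <- l2] = map -%R [seq x.1 * (e.2 - x.2) | x <- l2].
  by rewrite -map_comp; apply: eq_map => x /=; rewrite -mulrN opprB.
apply: schanges_cat_flip => //; rewrite all2_map_map; apply/allP => x.
- by move/e_le => ?; apply: nonneg_multipleM; rewrite subr_ge0.
- by move/ge_e => ?; apply: nonneg_multipleM; rewrite subr_ge0.
Qed.

End SignChanges.

Section Derivatives.
Context {R : realType}.

Lemma is_derive_continuous [h df : R -> R] :
  (forall x : R, is_derive x 1 h (df x)) -> continuous h.
Proof.
move=> dh x; apply: differentiable_continuous; apply/derivable1_diffP.
exact: (@ex_derive _ _ _ _ _ _ _ (dh x)).
Qed.

Lemma mvt_open [h df : R -> R] [a b : R] :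
  a < b -> (forall x : R, is_derive x 1 h (df x)) ->
  exists2 c, a < c < b & h b - h a = df c * (b - a).
Proof.
move=> ab dh.
have [c] := MVT ab (fun x _ => dh x) (continuous_subspaceT (is_derive_continuous dh)).
by rewrite in_itv /=; exists c.
Qed.

Lemma rolle_interlace [h df : R -> R] z zs :
  (forall x : R, is_derive x 1 h (df x)) -> path <%R z zs -> {in z :: zs, forall x, h x = 0} ->
  exists ys, [/\ size ys = size zs, path <%R z ys & {in ys, forall y, df y = 0}].
Proof.
move=> dh; elim: zs z => [|z' zs IH] z /=; first by exists [::].
move=> /andP[zz' zs_path] hz.
have [|ys [ys_size ys_path dys]] := IH z' zs_path.
  by move=> x xs; apply: hz; rewrite inE xs orbT.
have [y /andP[zy yz'] hy] := mvt_open zz' dh.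
move: hy; rewrite !hz ?inE ?eqxx ?orbT // subrr => /esym /eqP.
rewrite mulf_eq0 subr_eq0 (gt_eqF zz') orbF => /eqP dy.
exists (y :: ys); split => //=; first by rewrite ys_size.
  rewrite zy /=; case: ys ys_path {ys_size dys} => //= y' ys /andP[z'y' ->].
  by rewrite (lt_trans yz' z'y').
by move=> x; rewrite inE => /orP[/eqP -> //|/dys].
Qed.

End Derivatives.

Section ExponentialSums.
Context {R : realType}.
Implicit Types (p q : seq (R * R)) (t α : R).

Definition expsum p t : R := \sum_(x <- p) x.1 * expR (x.2 * t).

Definition expsum_dterms p := [seq (x.1 * x.2, x.2) | x <- p].

Definition shift_exponents α p := [seq (x.1, x.2 - α) | x <- p].

Lemma expsum_cons x p t : expsum (x :: p) t = x.1 * expR (x.2 * t) + expsum p t.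
Proof. by rewrite /expsum big_cons. Qed.

Lemma is_derive_expsum p t : is_derive t 1 (expsum p) (expsum (expsum_dterms p) t).
Proof.
elim: p => [|x p IH].
  have -> : expsum [::] = cst 0 by apply/funext => s; rewrite /expsum big_nil.
  exact: is_derive_cst.
have -> : expsum (x :: p) = (fun s => x.1 * expR (x.2 * s)) + expsum p.
  by apply/funext => s; rewrite expsum_cons.
rewrite expsum_cons /=; apply: is_deriveD IH.
have da : is_derive t 1 (fun s : R => x.2 * s) x.2.
  by have := is_deriveZ x.2 (is_derive_id t 1); rewrite /GRing.scale /= mulr1.
have := @is_deriveZ R R R _ x.1 t 1 _ (is_derive1_comp (is_derive_expR (x.2 * t)) da).
by move=> d; apply: is_derive_eq d _; rewrite /GRing.scale /= [expR _ * _]mulrC mulrA.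
Qed.

Lemma continuous_expsum p : continuous (expsum p).
Proof. exact: is_derive_continuous (is_derive_expsum p). Qed.

Lemma expsum_shift α p t :
  expsum (shift_exponents α p) t = expR (- α * t) * expsum p t.
Proof.
rewrite /expsum big_map mulr_sumr; apply: eq_bigr => x _ /=.
by rewrite mulrCA -expRD; congr (_ * expR _); ring.
Qed.

Lemma expsum_dterms_shift p w :
  sorted (relpre snd >=%R) p -> sign_changes (map fst p) = w.+1 ->
  exists α, let q := expsum_dterms (shift_exponents α p) in
  sorted (relpre snd >=%R) q /\ (sign_changes (map fst q) <= w)%N.
Proof.
move=> p_sorted /(sign_changes_shift_exponent _ _ p_sorted)[α changes].
exists α; split; last by rewrite /expsum_dterms /shift_exponents -!map_comp.
rewrite /expsum_dterms /shift_exponents -map_comp sorted_map.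
by apply: sub_sorted p_sorted => x y; rewrite /relpre /= lerD2r.
Qed.

(* With no sign change, all terms share one sign at every point. *)
Lemma expsum_eq0_no_sign_change p z :
  sign_changes (map fst p) = 0%N -> expsum p z = 0 -> forall t, expsum p t = 0.
Proof.
move=> /sign_changes_eq0[τ nτ τp] /eqP; rewrite -(mulrI_eq0 _ (lregP nτ)).
have τterm x s : x \in p -> 0 <= τ * (x.1 * expR (x.2 * s)).
  by move=> xp; rewrite mulrA mulr_ge0 ?expR_ge0 // τp ?map_f.
rewrite /expsum mulr_sumr big_seq psumr_eq0 => [/allP p0 t|x xp]; last exact: τterm.
rewrite big1_seq // => x /andP[_ xp]; move: (p0 x xp); rewrite xp /= mulrA.
by rewrite mulf_eq0 (gt_eqF (expR_gt0 _)) orbF mulf_eq0 (negPf nτ) => /eqP ->; rewrite mul0r.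
Qed.

Lemma descartes_expsum w p (zs : seq R) :
  sorted (relpre snd >=%R) p -> (sign_changes (map fst p) <= w)%N ->
  sorted <%R zs -> (w < size zs)%N -> {in zs, forall z, expsum p z = 0} ->
  forall t, expsum p t = 0.
Proof.
elim: w p zs => [|w IH] p [|z zs] p_sorted p_changes zs_sorted //= zs_size pz.
  by apply: (expsum_eq0_no_sign_change _ z); [lia | rewrite pz ?mem_head].
have [lt_changes|ge_changes] := ltnP (sign_changes (map fst p)) w.+1.
  by apply: (IH p (z :: zs)) => //=; lia.
have changes_eq : sign_changes (map fst p) = w.+1 by apply/eqP; rewrite eqn_leq p_changes.
have [α [q_sorted q_changes]] := expsum_dterms_shift _ _ p_sorted changes_eq.
set h := expsum (shift_exponents α p).
have hz : {in z :: zs, forall x, h x = 0}.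
  by move=> x /pz; rewrite /h expsum_shift => ->; rewrite mulr0.
have [ys [ys_size ys_path dys]] := rolle_interlace _ _ (is_derive_expsum _) zs_sorted hz.
have dh0 s : expsum (expsum_dterms (shift_exponents α p)) s = 0.
  by apply: (IH _ ys) => //; [exact: path_sorted ys_path | rewrite ys_size].
have h'0 (s : R) : is_derive s 1 h 0 by rewrite -(dh0 s); exact: is_derive_expsum.
move=> t; have /eqP := is_derive_0_is_cst t z h'0.
rewrite /h !expsum_shift (pz z (mem_head _ _)) mulr0 mulf_eq0.
by rewrite (gt_eqF (expR_gt0 _)) => /eqP.
Qed.

End ExponentialSums.

Section Roots.
Context {R : realType}.
Implicit Types (f : R -> R) (a b : R).

Lemma ivt_root [f a b] : continuous f -> a <= b ->
  (f a <= 0 <= f b) || (f b <= 0 <= f a) -> exists2 c, a <= c <= b & f c = 0.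
Proof.
move=> cf ab fab; have [|c] := IVT ab (continuous_subspaceT cf) (v := 0).
  by case/orP: fab => /andP[fa fb]; rewrite ge_min le_max ?fa ?fb ?orbT.
by rewrite in_itv /=; exists c.
Qed.

Lemma ivt_root_open [f a b] : continuous f -> a < b -> f a * f b < 0 ->
  exists2 c, a < c < b & f c = 0.
Proof.
move=> cf ab fab; have [|c /andP[ac cb] fc] := ivt_root cf (ltW ab).
  by case: (lerP (f a) 0) => fa; [have fb : 0 <= f b by nra | have fb : f b <= 0 by nra];
    rewrite ?fa ?fb ?(ltW fa) ?orbT.
exists c => //; rewrite !lt_def ac cb !andbT.
apply/andP; split; apply/eqP.
  by move=> ca; move: fab; rewrite -ca fc mul0r ltxx.
by move=> bc; move: fab; rewrite bc fc mulr0 ltxx.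
Qed.

End Roots.

Definition dips {R : realType} (f : R -> R) (m : nat) :=
  exists2 t, m%:R <= t <= m.+1%:R & f t < 0.

Section ExpsumTouchingRoot.
Context {R : realType} (p : seq (R * R)).
Hypothesis p_sorted : sorted (relpre snd >=%R) p.

(* A root at which the sum touches zero from below counts twice: passing to
   the derivative of [exp (- α t) * expsum p t] produces four roots. *)
Lemma expsum_touching_root a b m d u v : (sign_changes (map fst p) <= 4)%N ->
  a < b -> b < u < m -> m < v < d -> {in [:: a; b; m; d], forall x, expsum p x = 0} ->
  expsum p u < 0 -> expsum p v < 0 -> False.
Proof.
move=> p_changes ab /andP[bu um] /andP[mv vd] pz fu fv.
have [lt_changes|ge_changes] := ltnP (sign_changes (map fst p)) 4.
  have := descartes_expsum 3 p [:: a; b; m; d] p_sorted lt_changes _ isT pz u; rewrite /= ab.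
  by rewrite (lt_trans bu um) (lt_trans mv vd) => /(_ isT) fu0; move: fu; rewrite fu0 ltxx.
have changes_eq : sign_changes (map fst p) = 3.+1 by apply/eqP; rewrite eqn_leq p_changes.
have [α [q_sorted q_changes]] := expsum_dterms_shift _ _ p_sorted changes_eq.
set q := expsum_dterms _ in q_sorted q_changes; set h := expsum (shift_exponents α p).
have dh (x : R) : is_derive x 1 h (expsum q x) by exact: is_derive_expsum.
have hE x : h x = expR (- α * x) * expsum p x by exact: expsum_shift.
have [ha hb hm hd] : [/\ h a = 0, h b = 0, h m = 0 & h d = 0].
  by split; rewrite hE pz ?mulr0 // !inE eqxx ?orbT.
have [hu hv] : h u < 0 /\ h v < 0 by rewrite !hE !pmulr_rlt0 ?expR_gt0.
have [y0 /andP[ay0 y0b]] := mvt_open ab dh; rewrite ha hb subrr => /esym/eqP.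
rewrite mulf_eq0 subr_eq0 (gt_eqF ab) orbF => /eqP qy0.
have [s1 /andP[bs1 s1u] E1] := mvt_open bu dh.
have [s2 /andP[us2 s2m] E2] := mvt_open um dh.
have [s3 /andP[ms3 s3v] E3] := mvt_open mv dh.
have [s4 /andP[vs4 s4d] E4] := mvt_open vd dh.
rewrite ?hb ?hm ?hd in E1 E2 E3 E4.
have q1 : expsum q s1 < 0 by nra.
have q2 : 0 < expsum q s2 by nra.
have q3 : expsum q s3 < 0 by nra.
have q4 : 0 < expsum q s4 by nra.
have cq := continuous_expsum q.
have [y1 /andP[s1y1 y1s2] qy1] := ivt_root_open cq (lt_trans s1u us2) ltac:(nra).
have [y2 /andP[s2y2 y2s3] qy2] := ivt_root_open cq (lt_trans s2m ms3) ltac:(nra).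
have [y3 /andP[s3y3 y3s4] qy3] := ivt_root_open cq (lt_trans s3v vs4) ltac:(nra).
have q0 : forall t, expsum q t = 0.
  apply: (descartes_expsum 3 q [:: y0; y1; y2; y3]) q_sorted q_changes _ isT _.
    by rewrite /= !andbT; apply/and3P; split; lra.
  by move=> x; rewrite !inE => /or4P[] /eqP ->.
have h0 (x : R) : is_derive x 1 h 0 by rewrite -(q0 x).
by move: hu; rewrite (is_derive_0_is_cst u a h0) ha ltxx.
Qed.

End ExpsumTouchingRoot.

Section NonnegativeAtIntegers.
Context {R : realType} (p : seq (R * R)).
Hypotheses (p_sorted : sorted (relpre snd >=%R) p)
  (f0 : expsum p 0 = 0) (f_nat : forall k : nat, 0 <= expsum p k%:R).

Let cf := continuous_expsum p.

Lemma expsum_neg_roots t : 1 <= t -> expsum p t < 0 ->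
  exists c c', [/\ 1 <= c < t, t < c', expsum p c = 0 & expsum p c' = 0].
Proof.
move=> t1 ft; have t0 : 0 <= t by lra.
have /andP[_ tk] := truncn_itv t0; set k := Num.truncn t in tk.
have f1 : 0 <= expsum p 1 := f_nat 1.
have [|c /andP[c1 ct] fc] := ivt_root cf t1; first by rewrite (ltW ft) f1 orbT.
have [|c' /andP[tc' _] fc'] := ivt_root cf (ltW tk); first by rewrite (ltW ft) f_nat.
exists c, c'; split => //.
- by rewrite c1 lt_def ct andbT; apply: contraTneq ft => ->; rewrite fc ltxx.
- by rewrite lt_def tc' andbT; apply: contraTneq ft => <-; rewrite fc' ltxx.
Qed.

Lemma expsum_ge0_changes_le2 t : (sign_changes (map fst p) <= 2)%N ->
  1 <= t -> 0 <= expsum p t.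
Proof.
move=> p_changes t1; rewrite leNgt; apply/negP => ft.
have [c [c' [/andP[c1 ct] tc' fc fc']]] := expsum_neg_roots _ t1 ft.
have zs_sorted : sorted <%R [:: 0; c; c'].
  by rewrite /= (lt_trans ct tc') (lt_le_trans ltr01 c1).
have fz : {in [:: 0; c; c'], forall z, expsum p z = 0}.
  by move=> x; rewrite !inE => /or3P[] /eqP ->.
by move: ft; rewrite (descartes_expsum 2 p _ p_sorted p_changes zs_sorted isT fz) ltxx.
Qed.

(* The roots at [0], below [t1] and beyond [t2], with [m] either a root where
   the sum touches zero or flanked by two roots, are five roots counted with
   multiplicity. *)
Lemma expsum_neg_around_nat t1 t2 (m : nat) : (sign_changes (map fst p) <= 4)%N ->
  1 <= t1 -> t1 < m%:R < t2 -> expsum p t1 < 0 -> expsum p t2 < 0 -> False.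
Proof.
move=> p_changes t1_ge1 /andP[t1m mt2] ft1 ft2.
have [c1 [_ [/andP[c1_ge1 c1t1] _ fc1 _]]] := expsum_neg_roots _ t1_ge1 ft1.
have t2_ge1 : 1 <= t2 by lra.
have [_ [c4 [_ t2c4 _ fc4]]] := expsum_neg_roots _ t2_ge1 ft2.
have := f_nat m; rewrite le_eqVlt => /orP[/eqP/esym fm|fm].
  apply: (@expsum_touching_root _ p p_sorted 0 c1 m%:R c4 t1 t2 p_changes _ _ _ _ ft1 ft2).
  - lra.
  - by rewrite c1t1 t1m.
  - by rewrite mt2 t2c4.
  - by move=> x; rewrite !inE => /or4P[] /eqP ->.
have [c2 /andP[t1c2 c2m] fc2] := ivt_root_open cf t1m ltac:(nra).
have [c3 /andP[mc3 c3t2] fc3] := ivt_root_open cf mt2 ltac:(nra).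
have zs_sorted : sorted <%R [:: 0; c1; c2; c3; c4].
  by rewrite /= !andbT; apply/and4P; split; lra.
have fz : {in [:: 0; c1; c2; c3; c4], forall z, expsum p z = 0}.
  by move=> x; rewrite !inE => /or4P[| | |/orP[]] /eqP ->.
by move: ft1; rewrite (descartes_expsum 4 p _ p_sorted p_changes zs_sorted isT fz) ltxx.
Qed.

Lemma expsum_no_dip m : (sign_changes (map fst p) <= 2)%N -> (0 < m)%N ->
  ~ dips (expsum p) m.
Proof.
move=> p_changes m_gt0 [t /andP[mt _]]; apply/negP; rewrite -leNgt.
by apply: expsum_ge0_changes_le2 => //; apply: le_trans mt; rewrite ler1n.
Qed.

Lemma expsum_dips_unique m m' : (sign_changes (map fst p) <= 4)%N ->
  (0 < m)%N -> (0 < m')%N -> dips (expsum p) m -> dips (expsum p) m' -> m = m'.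
Proof.
move=> p_changes.
have dip_lt (a b : nat) : (0 < a)%N -> (a < b)%N -> dips (expsum p) a ->
    dips (expsum p) b -> False.
  move=> a_gt0 ab [t /andP[a_t ta1] ft] [t' /andP[bt' _] ft'].
  apply: (expsum_neg_around_nat t t' a.+1 p_changes _ _ ft ft').
    by apply: le_trans a_t; rewrite ler1n.
  have ta : t < a.+1%:R.
    by rewrite lt_neqAle ta1 andbT; apply: contraTneq ft => ->; rewrite -leNgt f_nat.
  have bt : b%:R < t'.
    by rewrite lt_neqAle bt' andbT; apply: contraTneq ft' => <-; rewrite -leNgt f_nat.
  by rewrite ta (le_lt_trans _ bt) // ler_nat.
move=> m_gt0 m'_gt0 dm dm'.
by case: (ltngtP m m') => // mm'; [case: (dip_lt m m') | case: (dip_lt m' m)].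
Qed.

End NonnegativeAtIntegers.

Lemma critical_exponent_exists {R : realType} (f : R -> R) (m0 : R) :
  continuous f -> 0 <= m0 -> (forall t, m0 <= t -> 0 <= f t) ->
  exists2 m, [/\ 0 <= m, (forall t, m <= t -> 0 <= f t) &
    forall m', 0 <= m' -> (forall t, m' <= t -> 0 <= f t) -> m <= m'] & m <= m0.
Proof.
move=> cf m0_ge0 f_ge0.
pose S := [set m : R | 0 <= m /\ forall t, m <= t -> 0 <= f t]%classic.
have Sm0 : S m0 by [].
have S_lb : has_lbound S by exists 0 => y [].
have S_ne : (S !=set0)%classic by exists m0.
exists (inf S); last exact: ge_inf.
split; [by apply: lb_le_inf => // y [] | | by move=> m' *; apply: ge_inf].
have gt_inf t : inf S < t -> 0 <= f t.
  by move=> /(inf_lt S_ne)[y [_ Sy] /ltW]; apply: Sy.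
move=> t; rewrite le_eqVlt => /orP[/eqP <-|]; last exact: gt_inf.
(* [f (inf S)] is a limit of values [f t >= 0] with [t > inf S]. *)
apply: (closed_cvg (fun x : R => 0 <= x) (@closed_ge R 0) _ _ (cvg_at_right_filter (cf _))).
by near=> s; apply: gt_inf; near: s; exact: nbhs_right_gt.
Unshelve. all: by end_near.
Qed.

Lemma free_slot (T : finType) (B : {set T}) (M : nat) (bad : nat -> T -> Prop) :
  (#|B| <= M)%N -> (forall m j, bad m j -> j \in B) ->
  (forall m m' j, bad m j -> bad m' j -> m = m') ->
  exists m : 'I_M.+1, forall j, ~ bad m j.
Proof.
move=> B_card bad_B bad_unique; apply: contrapT => no_free.
have all_bad (m : 'I_M.+1) : exists j, bad m j.
  apply: contrapT => m_free; apply: no_free.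
  by exists m => j bad_mj; apply: m_free; exists j.
have [g g_bad] := choice all_bad.
have g_inj : injective g.
  move=> m m' gm; apply: val_inj; apply: (bad_unique _ _ (g m) (g_bad m)).
  by rewrite gm; apply: g_bad.
have : g @: [set: 'I_M.+1] \subset B.
  by apply/fintype.subsetP => _ /imsetP[m _ ->]; apply: bad_B (g_bad m).
move/subset_leq_card; rewrite card_imset // cardsT card_ord => /leq_trans.
by move/(_ _ B_card); rewrite ltnn.
Qed.

Section PowerEntries.
Context {R : realType} {n : nat} (A U : 'M[R]_n) (lam : 'I_n -> R).
Hypotheses (U_orth : U *m U^T = 1%:M) (lam_gt0 : forall k, 0 < lam k)
  (lam_noninc : forall k l : 'I_n, (k <= l)%N -> lam l <= lam k)
  (A_def : A = U *m diag_mx (\row_k lam k) *m U^T) (A_ge0 : forall i j, 0 <= A i j).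

Definition entry_terms (i j : 'I_n) : seq (R * R) :=
  [seq (U i k * U j k, ln (lam k)) | k <- enum 'I_n].

Lemma mxpowR_entry t i j :
  mxpowR U lam t i j = \sum_k U i k * powR (lam k) t * U j k.
Proof. by rewrite /mxpowR mul_mx_diag !mxE; apply: eq_bigr => k _; rewrite !mxE. Qed.

Lemma mxpowR_expsum t i j : mxpowR U lam t i j = expsum (entry_terms i j) t.
Proof.
rewrite mxpowR_entry /expsum /entry_terms big_map big_enum /=.
apply: eq_bigr => k _ /=; rewrite /powR (gt_eqF (lam_gt0 k)) mulrAC.
by congr (_ * expR _); rewrite mulrC.
Qed.

Lemma entry_terms_sorted i j : sorted (relpre snd >=%R) (entry_terms i j).
Proof.
rewrite /entry_terms sorted_map.
have : sorted (relpre val ltn) (enum 'I_n).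
  by rewrite -sorted_map val_enum_ord iota_ltn_sorted.
apply: sub_sorted => k l; rewrite /relpre /= => kl.
by rewrite ler_ln ?posrE ?lam_gt0 // lam_noninc // ltnW.
Qed.

Lemma sign_change_entryE i j :
  sign_change_entry U i j = sign_changes (map fst (entry_terms i j)).
Proof. by rewrite /entry_terms -map_comp. Qed.

Lemma mxpowR0 : mxpowR U lam 0 = 1%:M.
Proof.
apply/matrixP => i j; rewrite mxpowR_entry -U_orth !mxE.
by apply: eq_bigr => k _; rewrite powRr0 mulr1 mxE.
Qed.

Lemma mxpowRD1 t : mxpowR U lam (t + 1) = mxpowR U lam t *m A.
Proof.
rewrite A_def /mxpowR !mulmxA -(mulmxA (U *m _) U^T U) (mulmx1C U_orth) mulmx1.
rewrite -!(mulmxA U); congr (U *m (_ *m U^T)).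
rewrite mul_diag_mx; apply/matrixP => a b; rewrite !mxE.
case: (eqVneq a b) => [->|ne] /=; rewrite ?mulr1n ?mulr0n ?mulr0 //.
by rewrite powRD ?(gt_eqF (lam_gt0 b)) ?implybT // powRr1 // ltW.
Qed.

Lemma mxpowR_nat_ge0 (k : nat) i j : 0 <= mxpowR U lam k%:R i j.
Proof.
elim: k i j => [|k IH] i j; first by rewrite mxpowR0 mxE ler0n.
by rewrite -natr1 mxpowRD1 mxE; apply: sumr_ge0 => l _; apply: mulr_ge0.
Qed.

Lemma mxpowR_diag_ge0 t i : 0 <= mxpowR U lam t i i.
Proof.
rewrite mxpowR_entry; apply: sumr_ge0 => k _.
by rewrite mulrAC mulr_ge0 ?powR_ge0 // -expr2 sqr_ge0.
Qed.

(* Right multiplication by the nonnegative [A] shifts the exponent by one, so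
   a nonnegative row of [A^t] on a window of length one stays nonnegative. *)
Lemma mxpowR_row_ge0 i m0 :
  (forall j s, m0 <= s <= m0 + 1 -> 0 <= mxpowR U lam s i j) ->
  forall j t, m0 <= t -> 0 <= mxpowR U lam t i j.
Proof.
move=> window.
have shifted (N : nat) j s : m0 + N%:R <= s <= m0 + N%:R + 1 ->
    0 <= mxpowR U lam s i j.
  elim: N j s => [|N IH] j s; first by rewrite addr0; exact: window.
  move=> /andP[Ns sN]; rewrite -(subrK 1 s) mxpowRD1 mxE.
  apply: sumr_ge0 => l _; apply: mulr_ge0 => //; apply: IH.
  by move: Ns sN; rewrite -natr1 => *; apply/andP; split; lra.
move=> j t m0t; have t_m0 : 0 <= t - m0 by lra.
have /andP[lo hi] := truncn_itv t_m0.
by apply: (shifted (Num.truncn (t - m0))); apply/andP; split; lra.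
Qed.

Lemma mxpowR_sym t i j : mxpowR U lam t i j = mxpowR U lam t j i.
Proof. rewrite !mxpowR_entry; apply: eq_bigr => k _; ring. Qed.

Lemma is_critical_exponent_sym i j m :
  is_critical_exponent U lam j i m -> is_critical_exponent U lam i j m.
Proof.
case=> m_ge0 m_ok m_min; split=> // [t mt|m' m'_ge0 m'_ok].
  by rewrite mxpowR_sym; exact: m_ok.
by apply: m_min => // t m't; rewrite mxpowR_sym; exact: m'_ok.
Qed.

Lemma sign_change_entry_sym i j : sign_change_entry U i j = sign_change_entry U j i.
Proof. by congr sign_changes; apply: eq_map => k; rewrite mulrC. Qed.

Lemma row_critical_exponent (M : nat) i :
  (forall j, (sign_change_entry U i j <= 4)%N) ->
  (#|[set j | (2 < sign_change_entry U i j)%N]| <= M)%N ->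
  forall j, exists m, is_critical_exponent U lam i j m /\ m <= (M + 1)%:R.
Proof.
move=> changes_le4 B_card j0; set B := [set j | _] in B_card.
pose bad m j := dips (expsum (entry_terms i j)) m.+1.
have bad_neq m j : bad m j -> j != i.
  by case=> t _; apply: contraTneq => ->; rewrite -mxpowR_expsum -leNgt mxpowR_diag_ge0.
have f0 j : j != i -> expsum (entry_terms i j) 0 = 0.
  by move=> ji; rewrite -mxpowR_expsum mxpowR0 mxE eq_sym (negPf ji).
have f_nat j k : 0 <= expsum (entry_terms i j) k%:R.
  by rewrite -mxpowR_expsum mxpowR_nat_ge0.
have bad_B m j : bad m j -> j \in B.
  move=> bad_mj; have ji := bad_neq _ _ bad_mj.
  rewrite inE ltnNge; apply/negP => changes_le2.
  apply: (expsum_no_dip _ (entry_terms_sorted i j) (f0 _ ji) (f_nat j) m.+1 _ isT bad_mj).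
  by rewrite -sign_change_entryE.
have bad_unique m m' j : bad m j -> bad m' j -> m = m'.
  move=> bad_mj bad_m'j; have ji := bad_neq _ _ bad_mj; apply: succn_inj.
  apply: (expsum_dips_unique _ (entry_terms_sorted i j) (f0 _ ji) (f_nat j)
    m.+1 m'.+1 _ isT isT bad_mj bad_m'j).
  by rewrite -sign_change_entryE.
have [m0 m0_free] := free_slot _ _ _ _ B_card bad_B bad_unique.
have row_ge0 : forall j t, m0.+1%:R <= t -> 0 <= mxpowR U lam t i j.
  apply: mxpowR_row_ge0 => j s /andP[m0s sm0]; rewrite leNgt; apply/negP => neg.
  apply: (m0_free j); exists s; last by rewrite -mxpowR_expsum.
  by rewrite m0s -natr1.
have cf : continuous (fun t => mxpowR U lam t i j0).
  by rewrite (funext (fun t => mxpowR_expsum t i j0)); exact: continuous_expsum.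
have [m m_crit m_le] := critical_exponent_exists _ _ cf (ler0n _ _) (row_ge0 j0).
by exists m; split; last by rewrite (le_trans m_le) // ler_nat addn1 ltn_ord.
Qed.

End PowerEntries.

Theorem lemma4p3 (R : realType) (n : nat) (A U : 'M[R]_n) (lam : 'I_n -> R)
  (M : nat) :
  doubly_nonnegative A ->
  A \in unitmx ->
  U *m U^T = 1%:M ->
  (forall k : 'I_n, 0 < lam k) ->
  (forall k l : 'I_n, (k <= l)%N -> lam l <= lam k) ->
  A = U *m diag_mx (\row_k lam k) *m U^T ->
  (* row version *)
  (forall i : 'I_n,
     (forall j : 'I_n, (sign_change_entry U i j <= 4)%N) ->
     (#|[set j : 'I_n | (2 < sign_change_entry U i j)%N]| <= M)%N ->
     forall j : 'I_n, exists m : R,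
       is_critical_exponent U lam i j m /\ m <= (M + 1)%:R) /\
  (* column version *)
  (forall j : 'I_n,
     (forall i : 'I_n, (sign_change_entry U i j <= 4)%N) ->
     (#|[set i : 'I_n | (2 < sign_change_entry U i j)%N]| <= M)%N ->
     forall i : 'I_n, exists m : R,
       is_critical_exponent U lam i j m /\ m <= (M + 1)%:R).
Proof.
move=> [_ _ A_ge0] _ U_orth lam_gt0 lam_noninc A_def.
have row := row_critical_exponent A U lam U_orth lam_gt0 lam_noninc A_def A_ge0 M.
split=> [//|j col_le4 col_card i].
have row_le4 k : (sign_change_entry U j k <= 4)%N by rewrite sign_change_entry_sym.
have row_card : (#|[set k | 2 < sign_change_entry U j k]| <= M)%N.
  suff -> : [set k | 2 < sign_change_entry U j k]%N =
            [set k | 2 < sign_change_entry U k j]%N by [].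
  by apply/setP => k; rewrite !inE sign_change_entry_sym.
have [m [m_crit m_le]] := row j row_le4 row_card i.
by exists m; split=> //; apply: is_critical_exponent_sym.
Qed.
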